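(* Let $n \geq 2$ be an integer and let $T_n=\{(1\,2),(1\,3),\dots,(1\,n)\} \subseteq S_n$. For each integer $1 \leq \ell \leq n-1$, both $n-\ell$ and $-(n-\ell)$ are eigenvalues of the Cayley graph $X(S_n,T_n)$, each with multiplicity at least $\binom{n-2}{\ell-1}$. If $n\ge 4$, then $0$ is an eigenvalue of $X(S_n,T_n)$ with multiplicity at least $\binom{n-1}{2}$.
   Context: For a group $G$ and an inverse-closed subset $T\subseteq G$, the Cayley graph $X(G,T)$ is the (undirected) graph with vertex set $G$ and an edge $\{g,tg\}$ for each $g\in G$ and $t\in T$. The spectrum/eigenvalues of a graph are those of its adjacency matrix. $S_n$ is the symmetric group on $[n]=\{1,\dots,n\}$. *)

From HB Require Import structures.
From mathcomp Require Import all_boot all_order all_algebra all_fingroup all_field.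
Set Implicit Arguments. Unset Strict Implicit. Unset Printing Implicit Defensive.
Import GRing.Theory Num.Theory.
Local Open Scope ring_scope.

(* The set T_n = {(1 2), (1 3), ..., (1 n)} in S_n = 'S_n (perms of 'I_n);
   point 1 of the paper is the ordinal 0 here. *)
Definition Tn (n : nat) : {set 'S_n} :=
  [set s : 'S_n | [exists i : 'I_n, exists j : 'I_n,
      [&& val i == 0%N, i != j & s == tperm i j]]].

(* Adjacency matrix of the Cayley graph X(G,T): vertex set G (indexed via
   enum_val), and g ~ h iff h = t g for some t in T, i.e. h g^-1 \in T. *)
Definition cayley_adj (gT : finGroupType) (T : {set gT}) : 'M[algC]_#|gT| :=
  \matrix_(i, j) ((enum_val j * (enum_val i)^-1 \in T)%g)%:R.

(* Multiplicity of an eigenvalue of the (real symmetric, hence diagonalizable)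
   adjacency matrix = dimension of its eigenspace. *)
Definition eig_mult (m : nat) (A : 'M[algC]_m) (lam : algC) : nat :=
  \rank (eigenspace A lam).

From HB Require Import structures.
From mathcomp Require Import all_boot all_order all_algebra all_fingroup all_field.
From mathcomp Require Import ring.
Import GRing.Theory Num.Theory.
Local Open Scope ring_scope.
Set Implicit Arguments. Unset Strict Implicit. Unset Printing Implicit Defensive.

(* We write n = m + 2; the point 0 plays the role of the paper's point 1.
   A function phi on S_n with sum_(j <> 0) phi (u * (0 j)) = lam * phi u for
   every u (a star eigenfunction) gives the left eigenvector g |-> phi (g^-1)
   of the adjacency matrix.  Hence c star eigenfunctions phi_i and c test
   permutations u_j whose test matrix (phi_i (u_j)) is invertible, or block
   triangular with invertible diagonal blocks, show that lam has
   multiplicity at least c (eig_mult_lb, eig_mult_lb_block).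

   Eigenvalues +-(n - l), l = k + 1: for a k-subset S = {s_1 < ... < s_k}
   of the m points other than 0 and 1, the determinant of the values of
   e_(s_a) - e_1 at the images u(b) of the first k points (hook_fun S) is a
   star eigenfunction for m + 1 - k = n - l, and its product with the sign
   of u one for -(n - l).  Permutations sending the first k points onto S
   give a diagonal test matrix, whence multiplicity >= C(m, k).

   Eigenvalue 0 (n >= 4): m functions of the images of two points
   (pair_phi) and C(m, 2) functions of the images of three points
   (triple_phi) have a block triangular test matrix with diagonal blocks
   (m - 1) and (m - 2) times the identity; m + C(m, 2) = C(n - 1, 2).  For
   n = 4 the second block degenerates and is replaced by a single further
   pair function. *)

(* A left eigenvector family X of M, paired with a test matrix Y such that
   X *m Y is invertible, has linearly independent rows; hence the eigenspace
   has dimension at least the number of rows of X. *)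
Lemma eigenspace_rank_lb (F : fieldType) p c (M : 'M[F]_p) lam
    (X : 'M_(c, p)) (Y : 'M_(p, c)) :
  X *m M = lam *: X -> X *m Y \in unitmx -> (c <= \rank (eigenspace M lam))%N.
Proof.
move=> /eigenspaceP XsubE XYunit.
by rewrite -(mxrank_unit XYunit); apply: leq_trans (mxrankM_maxl X Y) (mxrankS XsubE).
Qed.

Lemma eigenvalue_rank (F : fieldType) p (M : 'M[F]_p) lam :
  (0 < \rank (eigenspace M lam))%N -> eigenvalue M lam.
Proof. by rewrite /eigenvalue -mxrank_eq0 lt0n. Qed.

Lemma perm_map_exists (T : finType) (s t : seq T) :
  uniq s -> uniq t -> size s = size t -> exists u : {perm T}, map u s = t.
Proof.
elim: s t => [|x s IHs] [|y t] //=; first by exists 1%g.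
move=> /andP [xNs us] /andP [yNt ut] [size_st].
have [v vst] := IHs t us ut size_st.
exists (v * tperm (v x) y)%g; rewrite permM tpermL; congr (_ :: _).
rewrite -[RHS]vst; apply/eq_in_map => z zs; rewrite permM tpermD //.
  by rewrite (inj_eq perm_inj); apply: contraNneq xNs => ->.
by apply: contraNneq yNt => ->; rewrite -vst map_f.
Qed.

Lemma det_row0 (R : comPzRingType) p (M : 'M[R]_p) i :
  (forall j, M i j = 0) -> \det M = 0.
Proof. by move=> Mi0; rewrite (expand_det_row M i) big1 // => j _; rewrite Mi0 mul0r. Qed.

Lemma det_col0 (R : comPzRingType) p (M : 'M[R]_p) j :
  (forall i, M i j = 0) -> \det M = 0.
Proof. by move=> Mj0; rewrite -det_tr (det_row0 (i := j)) // => i; rewrite mxE Mj0. Qed.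

Lemma det2 (R : comPzRingType) (M : 'M[R]_2) :
  \det M = M ord0 ord0 * M ord_max ord_max - M ord0 ord_max * M ord_max ord0.
Proof.
rewrite (expand_det_row _ ord0) !big_ord_recl big_ord0 /cofactor !det_mx11 !mxE /=.
have -> : lift ord0 (0 : 'I_1) = ord_max by apply: val_inj.
have -> : lift ord_max (0 : 'I_1) = ord0 :> 'I_2 by apply: val_inj.
by rewrite expr0 expr1 mul1r addr0 mulN1r mulrN.
Qed.

(* Multilinearity in one row: if the matrices F a agree outside row i0 and
   their rows i0 sum to zero, then so do their determinants. *)
Lemma det_sum_row0 (R : comPzRingType) p (I : finType) (F : I -> 'M[R]_p) i0 :
  (forall a b i j, i != i0 -> F a i j = F b i j) ->
  (forall j, \sum_a F a i0 j = 0) -> \sum_a \det (F a) = 0.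
Proof.
move=> Fagree Fsum0.
under eq_bigr => a _ do rewrite (expand_det_row (F a) i0).
rewrite exchange_big big1 // => j _.
case: (pickP (fun _ : I => true)) => [a0 _ | I0]; last by rewrite big_pred0.
have cof a : cofactor (F a) i0 j = cofactor (F a0) i0 j.
  rewrite /cofactor; congr (_ * \det _).
  by apply/matrixP => i k; rewrite !mxE (Fagree a a0) // eq_sym neq_lift.
by under eq_bigr => a _ do rewrite cof; rewrite -mulr_suml Fsum0 mul0r.
Qed.

Lemma diag_unitmx (F : fieldType) c (M : 'M[F]_c) (d : 'I_c -> F) :
  (forall i j, M i j = d j * (i == j)%:R) -> (forall j, d j != 0) -> M \in unitmx.
Proof.
move=> Mdiag d_neq0; have -> : M = diag_mx (\row_j d j).
  by apply/matrixP => i j; rewrite Mdiag !mxE mulr_natr; case: eqP => [->|].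
by rewrite unitmxE det_diag unitfE; apply/prodf_neq0 => j _; rewrite mxE.
Qed.

Section StarEigenfunctions.
Variable m : nat.
Local Notation n := m.+2.
Local Notation N := #|{perm 'I_n}|.
Local Notation A := (cayley_adj (Tn n)).
Local Notation tau j := (tperm (ord0 : 'I_n) j).

Lemma sum_Tn (G : 'S_n -> algC) :
  \sum_(s in Tn n) G s = \sum_(j | j != ord0) G (tau j).
Proof.
have -> : Tn n = [set tau j | j in [set~ ord0]].
  apply/setP => s; rewrite inE; apply/idP/imsetP => [| [j]].
    case/existsP => i /existsP [j /and3P [/eqP i0 ij /eqP ->]].
    have i_ord0 : i = ord0 by apply/val_inj.
    by rewrite i_ord0 in ij *; exists j; rewrite // !inE eq_sym.
  rewrite !inE => j0 ->; apply/existsP; exists ord0; apply/existsP; exists j.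
  by rewrite /= eq_sym j0 eqxx.
rewrite big_imset => [|j k _ _ /(congr1 (fun s : 'S_n => s ord0))]; last first.
  by rewrite !tpermL.
by apply: eq_bigl => j; rewrite !inE.
Qed.

(* phi : S_n -> C is a star eigenfunction for lam when summing phi over the
   right translates u * tau j gives lam * phi u.  Then g |-> phi (g^-1) is a
   left eigenvector of the adjacency matrix. *)
Definition star_eigfun (phi : 'S_n -> algC) (lam : algC) :=
  forall u : 'S_n, \sum_(j | j != ord0) phi (u * tau j)%g = lam * phi u.

Definition fun_rows c (phi : 'I_c -> 'S_n -> algC) : 'M[algC]_(c, N) :=
  \matrix_(i, g) phi i (enum_val g)^-1%g.
Definition test_cols c (u : 'I_c -> 'S_n) : 'M[algC]_(N, c) :=
  \matrix_(g, j) ((enum_val g)^-1 == u j)%g%:R.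

Lemma fun_rowsA c (phi : 'I_c -> 'S_n -> algC) lam :
  (forall i, star_eigfun (phi i) lam) -> fun_rows phi *m A = lam *: fun_rows phi.
Proof.
move=> phi_eig; apply/matrixP => i h; rewrite !mxE; set v := enum_val h.
under eq_bigr do rewrite !mxE.
rewrite -(big_enum_val (fun g => phi i g^-1%g * ((v * g^-1)%g \in Tn n)%:R)) /=.
have shift_inj : injective (fun t : 'S_n => t^-1 * v)%g.
  by move=> s t /mulIg /invg_inj.
rewrite (reindex_inj shift_inj) /=.
under eq_bigr do rewrite invMg invgK mulKVg mulr_natr mulrb.
by rewrite -big_mkcond /= sum_Tn phi_eig.
Qed.

Lemma fun_rows_test_cols c d (phi : 'I_c -> 'S_n -> algC) (u : 'I_d -> 'S_n) :
  fun_rows phi *m test_cols u = \matrix_(i, j) phi i (u j).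
Proof.
apply/matrixP => i j; rewrite !mxE.
under eq_bigr do rewrite !mxE.
rewrite -(big_enum_val (fun s => phi i s^-1%g * (s^-1 == u j)%g%:R)).
rewrite (reindex_inj invg_inj) /=.
under eq_bigr do rewrite invgK mulr_natr mulrb.
by rewrite -big_mkcond big_pred1_eq.
Qed.

Lemma eig_mult_lb c lam (phi : 'I_c -> 'S_n -> algC) (u : 'I_c -> 'S_n) :
  (forall i, star_eigfun (phi i) lam) -> \matrix_(i, j) phi i (u j) \in unitmx ->
  (c <= eig_mult A lam)%N.
Proof.
move=> phi_eig unit_test; apply: (eigenspace_rank_lb (Y := test_cols u)).
  exact: fun_rowsA.
by rewrite fun_rows_test_cols.
Qed.

Lemma eig_mult_lb_block c1 c2 lam (phi1 : 'I_c1 -> 'S_n -> algC)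
    (phi2 : 'I_c2 -> 'S_n -> algC) (u1 : 'I_c1 -> 'S_n) (u2 : 'I_c2 -> 'S_n) :
  (forall i, star_eigfun (phi1 i) lam) -> (forall i, star_eigfun (phi2 i) lam) ->
  \matrix_(i, j) phi1 i (u1 j) \in unitmx -> \matrix_(i, j) phi2 i (u2 j) \in unitmx ->
  (forall i j, phi2 i (u1 j) = 0) -> (c1 + c2 <= eig_mult A lam)%N.
Proof.
move=> phi1_eig phi2_eig unit1 unit2 phi2u1_0.
apply: (eigenspace_rank_lb (X := col_mx (fun_rows phi1) (fun_rows phi2))
                           (Y := row_mx (test_cols u1) (test_cols u2))).
  by rewrite mul_col_mx (fun_rowsA phi1_eig) (fun_rowsA phi2_eig) scale_col_mx.
rewrite mul_col_row !fun_rows_test_cols.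
have -> : \matrix_(i, j) phi2 i (u1 j) = 0 by apply/matrixP => i j; rewrite !mxE.
by rewrite unitmxE det_ublock unitrM -!unitmxE unit1 unit2.
Qed.

End StarEigenfunctions.

Section Points.
Variable m : nat.
Local Notation n := m.+2.

(* Besides the centre 0 of the star, we single out the point [one] and
   enumerate the remaining m points as [pt t], t : 'I_m. *)
Definition one : 'I_n := lift ord0 ord0.
Definition pt (t : 'I_m) : 'I_n := lift ord0 (lift ord0 t).

Lemma pt_inj : injective pt.
Proof. by move=> s t /lift_inj /lift_inj. Qed.
Lemma pt_neq0 t : (pt t == ord0) = false.
Proof. by apply/negbTE; rewrite eq_sym neq_lift. Qed.
Lemma pt_neq1 t : (pt t == one) = false.
Proof. by rewrite (inj_eq lift_inj); apply/negbTE; rewrite eq_sym neq_lift. Qed.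
Lemma one_neq0 : (one == ord0) = false.
Proof. by apply/negbTE; rewrite eq_sym neq_lift. Qed.

(* The vectors e_(pt t) - e_one span the functions on the points that vanish
   at 0 and have total sum 0; they are the building blocks of all
   eigenfunctions below. *)
Definition wvec (t : 'I_m) (y : 'I_n) : algC := (y == pt t)%:R - (y == one)%:R.

Lemma wvec0 t : wvec t ord0 = 0.
Proof. by rewrite /wvec eq_sym pt_neq0 eq_sym one_neq0 subrr. Qed.
Lemma wvec_pt t s : wvec t (pt s) = (s == t)%:R.
Proof. by rewrite /wvec (inj_eq pt_inj) pt_neq1 subr0. Qed.

Lemma sum_delta (c : 'I_n) : \sum_(y : 'I_n) ((y == c)%:R : algC) = 1.
Proof. by rewrite (bigD1 c) //= eqxx big1 ?addr0 // => y /negbTE ->. Qed.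

Lemma sum_nonzero (F : 'I_n -> algC) :
  \sum_(j | j != ord0) F j = \sum_j F j - F ord0.
Proof. by rewrite [in RHS](bigD1 ord0) //= addrAC subrr add0r. Qed.

Lemma sum_wvec t : \sum_y wvec t y = 0.
Proof. by rewrite sumrB !sum_delta subrr. Qed.

End Points.
Arguments pt_inj {m}.

Section HookDeterminant.
Variables m k : nat.
Hypothesis k_le_m : (k <= m)%N.
Local Notation n := m.+2.
Local Notation tau j := (tperm (ord0 : 'I_n) j).

Definition elt (S : {set 'I_m}) (a : 'I_k) : 'I_m := nth (widen_ord k_le_m a) (enum S) a.

Section KSubset.
Variable S : {set 'I_m}.
Hypothesis card_S : #|S| = k.

Lemma elt_in a : elt S a \in S.
Proof. by rewrite /elt -mem_enum mem_nth // -cardE card_S. Qed.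

Lemma elt_inj : injective (elt S).
Proof.
move=> a b; rewrite /elt.
have b_lt : (b < size (enum S))%N by rewrite -cardE card_S.
rewrite (set_nth_default (widen_ord k_le_m a) _ b_lt) => /eqP.
by rewrite nth_uniq ?enum_uniq -?cardE ?card_S // => /eqP/val_inj.
Qed.

Lemma elt_onto t : t \in S -> exists a, elt S a = t.
Proof.
move=> tS; have idx_lt : (index t (enum S) < k)%N.
  by rewrite -card_S cardE index_mem mem_enum.
by exists (Ordinal idx_lt); rewrite /elt /= nth_index // mem_enum.
Qed.

End KSubset.

Definition hookdet (S : {set 'I_m}) (x : 'I_k -> 'I_n) : algC :=
  \det (\matrix_(b, a) wvec (elt S a) (x b)).

Lemma hookdet_ext S x y : x =1 y -> hookdet S x = hookdet S y.
Proof. by move=> exy; congr (\det _); apply/matrixP => b a; rewrite !mxE exy. Qed.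

Lemma hookdet_hit0 S x b0 : x b0 = ord0 -> hookdet S x = 0.
Proof. by move=> xb0; rewrite /hookdet (det_row0 (i := b0)) // => a; rewrite mxE xb0 wvec0. Qed.

Lemma hookdet_repeat S x b1 b2 : b1 != b2 -> x b1 = x b2 -> hookdet S x = 0.
Proof. by move=> b12 xb12; apply: (determinant_alternate b12) => a; rewrite !mxE xb12. Qed.

(* Replacing x b0 by every point in turn sums to 0, as the wvec sum to 0. *)
Definition upd (x : 'I_k -> 'I_n) b0 (j : 'I_n) := fun b => if b == b0 then j else x b.

Lemma sum_hookdet_upd S x b0 : \sum_j hookdet S (upd x b0 j) = 0.
Proof.
apply: (det_sum_row0 (i0 := b0)) => [j1 j2 b a bNb0 | a].
  by rewrite !mxE /upd (negbTE bNb0).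
by under eq_bigr do rewrite mxE /upd eqxx; rewrite sum_wvec.
Qed.

(* The star eigenvalue equation for hookdet, first when x hits the centre
   (both sides vanish), then when it avoids it (only the m + 1 - k
   transpositions moving no x b contribute). *)
Lemma hookdet_star_hit0 S x b0 : injective x -> x b0 = ord0 ->
  \sum_(j | j != ord0) hookdet S (fun b => tau j (x b)) = 0.
Proof.
move=> x_inj xb0; rewrite -[RHS](sum_hookdet_upd S x b0) [RHS](bigD1 ord0) //.
rewrite [hookdet S (upd _ _ _)](@hookdet_hit0 _ _ b0) /= ?add0r; last by rewrite /upd eqxx.
apply: eq_bigr => j j0; case: (pickP (fun b => x b == j)) => [b1 /eqP xb1 | jNx].
  have b10 : b1 != b0 by apply: contra_neq j0 => b1b0; rewrite -xb1 b1b0.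
  rewrite (@hookdet_hit0 _ _ b1) ?xb1 ?tpermR //.
  by rewrite (@hookdet_repeat S _ b1 b0 b10) // /upd eqxx (negbTE b10).
apply: hookdet_ext => b; rewrite /upd; case: eqP => [-> | /eqP bNb0]; first by rewrite xb0 tpermL.
rewrite tpermD //; last by rewrite eq_sym jNx.
by rewrite eq_sym; apply: contra bNb0 => /eqP xb; apply/eqP/x_inj; rewrite xb0 xb.
Qed.

Lemma hookdet_star_miss0 S x : injective x -> (forall b, x b != ord0) ->
  \sum_(j | j != ord0) hookdet S (fun b => tau j (x b)) = (m.+1 - k)%:R * hookdet S x.
Proof.
move=> x_inj xN0; set X := [set x b | b in 'I_k].
rewrite (eq_bigr (fun j => (j \notin X)%:R * hookdet S x)) => [|j j0]; last first.
  have [/imsetP [b _ ->] | jNX] := boolP (j \in X).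
    by rewrite mul0r (@hookdet_hit0 _ _ b) // tpermR.
  rewrite mul1r; apply: hookdet_ext => b; rewrite tpermD //; first by rewrite eq_sym xN0.
  by apply: contraNneq jNX => ->; apply: imset_f.
have X0 : ord0 \notin X by apply/imsetP => -[b _ /esym/eqP]; rewrite (negbTE (xN0 b)).
rewrite -mulr_suml.
have -> : \sum_(j | j != ord0) ((j \notin X)%:R : algC) = #|~: X|%:R - 1.
  rewrite sum_nonzero X0 -sum1_card natr_sum [in RHS]big_mkcond /=.
  by congr (_ - _); apply: eq_bigr => j _; rewrite inE; case: (j \in X).
rewrite cardsCs setCK card_imset // !card_ord subSn; last exact: leqW.
by rewrite mulrSr addrK.
Qed.

Lemma hookdet_pt_elt (S T : {set 'I_m}) : #|S| = k -> #|T| = k ->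
  hookdet S (fun b => pt (elt T b)) = (S == T)%:R.
Proof.
move=> card_S card_T; rewrite /hookdet.
have -> : \matrix_(b, a) wvec (elt S a) (pt (elt T b)) = \matrix_(b, a) (elt T b == elt S a)%:R.
  by apply/matrixP => b a; rewrite !mxE wvec_pt.
have [<- | ST] := eqVneq S T.
  rewrite (_ : \matrix_(b, a) _ = 1%:M) ?det1 //.
  by apply/matrixP => b a; rewrite !mxE (inj_eq (elt_inj card_S)).
move: ST; rewrite eqEcard card_S card_T leqnn andbT => /subsetPn [t tS tNT].
have [a eat] := elt_onto card_S tS.
rewrite (det_col0 (j := a)) // => b; rewrite mxE eat; case: eqP => // eTt.
by move: tNT; rewrite -eTt (elt_in card_T).
Qed.

Lemma hookdet_star S x : injective x ->
  \sum_(j | j != ord0) hookdet S (fun b => tau j (x b)) = (m.+1 - k)%:R * hookdet S x.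
Proof.
move=> x_inj; case: (pickP (fun b => x b == ord0)) => [b0 /eqP xb0 | xN0].
  by rewrite (hookdet_star_hit0 _ x_inj xb0) (hookdet_hit0 _ xb0) mulr0.
by apply: hookdet_star_miss0 => // b; rewrite xN0.
Qed.

End HookDeterminant.

Section HookEigenfunctions.
Variables m k : nat.
Hypothesis k_le_m : (k <= m)%N.
Local Notation n := m.+2.
Local Notation A := (cayley_adj (Tn n)).
Local Notation elt := (elt k_le_m).
Local Notation hookdet := (hookdet k_le_m).

Definition pos (b : 'I_k) : 'I_n := widen_ord (leq_trans k_le_m (leqW (leqnSn m))) b.

Lemma pos_inj : injective pos.
Proof. by move=> a b eab; apply/val_inj; apply: (congr1 val eab). Qed.

Definition hook_fun (S : {set 'I_m}) (u : 'S_n) : algC := hookdet S (fun b => u (pos b)).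
Definition signed_hook_fun (S : {set 'I_m}) (u : 'S_n) : algC :=
  (-1) ^+ (odd_perm u) * hook_fun S u.

Lemma hook_fun_eig S : star_eigfun (hook_fun S) (m.+1 - k)%:R.
Proof.
move=> u; rewrite /hook_fun -hookdet_star; last by move=> a b /perm_inj /pos_inj.
by apply: eq_bigr => j _; apply: hookdet_ext => b; rewrite permM.
Qed.

Lemma signed_hook_fun_eig S : star_eigfun (signed_hook_fun S) (- (m.+1 - k)%:R).
Proof.
move=> u; rewrite /signed_hook_fun.
under eq_bigr => j j0 do
  rewrite odd_permM odd_tperm eq_sym j0 signr_addb expr1 mulrN1 mulNr.
by rewrite sumrN -mulr_sumr hook_fun_eig mulrCA mulNr.
Qed.

Lemma hook_test_exists (S : {set 'I_m}) :
  #|S| = k -> exists u : 'S_n, forall b, u (pos b) = pt (elt S b).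
Proof.
move=> card_S.
have [| | |u] := @perm_map_exists _ (map pos (enum 'I_k))
                                    (map (fun b => pt (elt S b)) (enum 'I_k)).
- by rewrite map_inj_uniq ?enum_uniq //; apply: pos_inj.
- by rewrite map_inj_uniq ?enum_uniq // => a b /pt_inj /(elt_inj card_S).
- by rewrite !size_map.
rewrite -map_comp => /eq_in_map uE.
by exists u => b; apply: uE; rewrite mem_enum.
Qed.

Lemma hook_fun_test (S T : {set 'I_m}) (u : 'S_n) : #|S| = k -> #|T| = k ->
  (forall b, u (pos b) = pt (elt T b)) -> hook_fun S u = (S == T)%:R.
Proof.
move=> card_S card_T uT.
by rewrite /hook_fun (hookdet_ext k_le_m S uT) (hookdet_pt_elt k_le_m card_S card_T).
Qed.

(* Indexing the k-subsets by 'I_(binomial m k) gives binomial m k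
   eigenfunctions whose test matrix is (up to signs) the identity. *)
Lemma hook_eig_mult :
  ('C(m, k) <= eig_mult A (m.+1 - k)%:R)%N /\ ('C(m, k) <= eig_mult A (- (m.+1 - k)%:R))%N.
Proof.
pose KS := [set S : {set 'I_m} | #|S| == k].
pose S (i : 'I_#|KS|) : {set 'I_m} := enum_val i.
have card_S i : #|S i| = k by have := enum_valP i; rewrite inE => /eqP.
have [u uS] := fin_all_exists (fun i => hook_test_exists (card_S i)).
have test i j : hook_fun (S i) (u j) = (i == j)%:R.
  by rewrite (hook_fun_test (card_S i) (card_S j) (uS j)) (inj_eq enum_val_inj).
have <- : #|KS| = 'C(m, k) by rewrite card_draws card_ord.
split.
  apply: (eig_mult_lb (phi := fun i => hook_fun (S i)) (u := u)) => [i|].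
    exact: hook_fun_eig.
  by apply: (diag_unitmx (d := fun _ => 1)) => [i j|j]; rewrite ?mxE ?test ?mul1r ?oner_neq0.
apply: (eig_mult_lb (phi := fun i => signed_hook_fun (S i)) (u := u)) => [i|].
  exact: signed_hook_fun_eig.
apply: (diag_unitmx (d := fun j => (-1) ^+ odd_perm (u j))) => [i j|j].
  by rewrite mxE /signed_hook_fun test.
by rewrite signr_eq0.
Qed.

End HookEigenfunctions.

Section KernelFunctions.
Variable m : nat.
Local Notation n := m.+2.
Local Notation tau j := (tperm (ord0 : 'I_n) j).

Lemma tau_fix j y : y != ord0 -> y != j -> tau j y = y.
Proof. by move=> y0 yj; rewrite tpermD // eq_sym. Qed.

Lemma tau0 y : tau ord0 y = y.
Proof. by rewrite tperm1 perm1. Qed.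

Lemma sum_perturb (F G : 'I_n -> algC) (s : seq 'I_n) : uniq s ->
  (forall j, j \notin s -> F j = G j) ->
  \sum_j F j = \sum_j G j + \sum_(j <- s) (F j - G j).
Proof.
move=> us FG; rewrite -[LHS](subrK (\sum_j G j)) addrC -sumrB; congr (_ + _).
rewrite [RHS]big_uniq // [RHS]big_mkcond; apply: eq_bigr => j _.
by case: ifPn => // /FG ->; rewrite subrr.
Qed.

Lemma natr_n : (m.+2)%:R = m%:R + 2 :> algC.
Proof. by rewrite -addn2 natrD. Qed.

Definition zeta (c : algC) (y : 'I_n) : algC := c * (y == ord0)%:R - 1.

Lemma zeta0 c : zeta c ord0 = c - 1.
Proof. by rewrite /zeta eqxx mulr1. Qed.
Lemma zetaN c y : y != ord0 -> zeta c y = -1.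
Proof. by move=> /negbTE y0; rewrite /zeta y0 mulr0 sub0r. Qed.
Lemma sum_zeta c : \sum_y zeta c y = c - (m.+2)%:R.
Proof. by rewrite sumrB -mulr_sumr sum_delta mulr1 sumr_const card_ord. Qed.

Variables a b : 'I_n -> algC.
Hypotheses (a0 : a ord0 = 0) (b0 : b ord0 = 0).
Hypotheses (sum_a : \sum_y a y = 0) (sum_b : \sum_y b y = 0).

Definition pair_fun (y z : 'I_n) : algC := a z * zeta m%:R y + a y * zeta m%:R z.

Lemma pair_fun_sym y z : pair_fun y z = pair_fun z y.
Proof. by rewrite /pair_fun addrC. Qed.

Lemma pair_fun_star0 z : z != ord0 ->
  \sum_(j | j != ord0) pair_fun (tau j ord0) (tau j z) = 0.
Proof.
move=> z0; rewrite sum_nonzero !tau0.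
rewrite (sum_perturb (G := fun j => pair_fun j z) (s := [:: z])) //; last first.
  by move=> j; rewrite inE => jz; rewrite tpermL tau_fix // eq_sym.
rewrite big_seq1 tpermL tpermR.
have -> : \sum_j pair_fun j z = a z * (m%:R - (m.+2)%:R).
  by rewrite big_split /= -mulr_sumr -mulr_suml sum_zeta sum_a mul0r addr0.
by rewrite /pair_fun !zeta0 !zetaN // a0 natr_n; ring.
Qed.

Lemma pair_fun_star y z : y != z ->
  \sum_(j | j != ord0) pair_fun (tau j y) (tau j z) = 0.
Proof.
move=> yz; have [y0 | y0] := eqVneq y ord0.
  by rewrite y0 in yz *; apply: pair_fun_star0; rewrite eq_sym.
have [-> | z0] := eqVneq z ord0.
  by rewrite -[RHS](pair_fun_star0 y0); apply: eq_bigr => j _; rewrite pair_fun_sym.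
rewrite sum_nonzero !tau0.
have uniq_yz : uniq [:: y; z] by rewrite /= inE yz.
rewrite (sum_perturb (G := fun j => pair_fun y z) uniq_yz); last first.
  by move=> j; rewrite !inE negb_or => /andP [jy jz]; rewrite !tau_fix // eq_sym.
have zy : z != y by rewrite eq_sym.
rewrite !big_cons big_nil !tpermR (tau_fix y0 yz) (tau_fix z0 zy).
by rewrite sumr_const card_ord -mulr_natl /pair_fun !zeta0 !zetaN // a0 natr_n; ring.
Qed.

Definition minor2 (y z : 'I_n) : algC := a y * b z - a z * b y.

Lemma sum_minor2l z : \sum_y minor2 y z = 0.
Proof. by rewrite sumrB -mulr_suml -mulr_sumr sum_a sum_b mul0r mulr0 subrr. Qed.
Lemma sum_minor2r y : \sum_z minor2 y z = 0.
Proof. by rewrite sumrB -mulr_sumr -mulr_suml sum_a sum_b mul0r mulr0 subrr. Qed.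

Definition triple_fun (x0 x1 x2 : 'I_n) : algC :=
  minor2 x0 x1 * zeta (m%:R - 1) x2 + minor2 x0 x2 * zeta (m%:R - 1) x1.

Lemma triple_fun_sym x0 x1 x2 : triple_fun x0 x1 x2 = triple_fun x0 x2 x1.
Proof. by rewrite /triple_fun addrC. Qed.

Lemma triple_fun_star_0 x1 x2 : x1 != ord0 -> x2 != ord0 -> x1 != x2 ->
  \sum_(j | j != ord0) triple_fun (tau j ord0) (tau j x1) (tau j x2) = 0.
Proof.
move=> x10 x20 x12; have x21 : x2 != x1 by rewrite eq_sym.
have uniq_x : uniq [:: x1; x2] by rewrite /= inE x12.
rewrite sum_nonzero !tau0 (sum_perturb (G := fun j => triple_fun j x1 x2) uniq_x); last first.
  move=> j; rewrite !inE negb_or => /andP [jx1 jx2].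
  by rewrite tpermL !tau_fix // eq_sym.
have -> : \sum_j triple_fun j x1 x2 = 0.
  by rewrite big_split /= -!mulr_suml !sum_minor2l !mul0r addr0.
rewrite !big_cons big_nil !tpermL !tpermR (tau_fix x20 x21) (tau_fix x10 x12).
by rewrite /triple_fun /minor2 !zeta0 !zetaN // a0 b0; ring.
Qed.

Lemma triple_fun_star_1 x0 x2 : x0 != ord0 -> x2 != ord0 -> x0 != x2 ->
  \sum_(j | j != ord0) triple_fun (tau j x0) (tau j ord0) (tau j x2) = 0.
Proof.
move=> x00 x20 x02; have x20' : x2 != x0 by rewrite eq_sym.
have uniq_x : uniq [:: x0; x2] by rewrite /= inE x02.
rewrite sum_nonzero !tau0 (sum_perturb (G := fun j => triple_fun x0 j x2) uniq_x); last first.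
  move=> j; rewrite !inE negb_or => /andP [jx0 jx2].
  by rewrite tpermL !tau_fix // eq_sym.
have -> : \sum_j triple_fun x0 j x2 = minor2 x0 x2 * ((m%:R - 1) - (m.+2)%:R).
  by rewrite big_split /= -mulr_suml -mulr_sumr sum_minor2r sum_zeta mul0r add0r.
rewrite !big_cons big_nil !tpermL !tpermR (tau_fix x20 x20') (tau_fix x00 x02).
by rewrite /triple_fun /minor2 !zeta0 !zetaN // a0 b0 natr_n; ring.
Qed.

Lemma triple_fun_star x0 x1 x2 : x0 != x1 -> x0 != x2 -> x1 != x2 ->
  \sum_(j | j != ord0) triple_fun (tau j x0) (tau j x1) (tau j x2) = 0.
Proof.
move=> x01 x02 x12.
have [x00 | x00] := eqVneq x0 ord0.
  by rewrite x00 in x01 x02 *; apply: triple_fun_star_0; rewrite // eq_sym.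
have [x10 | x10] := eqVneq x1 ord0.
  by rewrite x10 in x01 x12 *; apply: triple_fun_star_1; rewrite // eq_sym.
have [x20 | x20] := eqVneq x2 ord0.
  rewrite x20 in x02 x12 *; rewrite -[RHS](triple_fun_star_1 x00 x10 x01).
  by apply: eq_bigr => j _; rewrite triple_fun_sym.
have uniq_x : uniq [:: x0; x1; x2] by rewrite /= !inE negb_or x01 x02 x12.
rewrite sum_nonzero !tau0 (sum_perturb (G := fun j => triple_fun x0 x1 x2) uniq_x); last first.
  by move=> j; rewrite !inE !negb_or => /and3P [jx0 jx1 jx2]; rewrite !tau_fix // eq_sym.
have [x10' x20' x21] : [/\ x1 != x0, x2 != x0 & x2 != x1] by rewrite !(eq_sym x1) !(eq_sym x2).
rewrite !big_cons big_nil !tpermR (tau_fix x00 x01) (tau_fix x00 x02) (tau_fix x10 x10').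
rewrite (tau_fix x10 x12) (tau_fix x20 x20') (tau_fix x20 x21) sumr_const card_ord.
by rewrite -mulr_natl /triple_fun /minor2 !zeta0 !zetaN // a0 b0 natr_n; ring.
Qed.

End KernelFunctions.

Section KernelEigenfunctions.
Variable m : nat.
Local Notation n := m.+2.

Lemma two_point_test y0 y1 : y0 != y1 -> exists u : 'S_n, u ord0 = y0 /\ u (one m) = y1.
Proof.
move=> y01; have [| | |u [u0 u1]] := @perm_map_exists _ [:: ord0; one m] [:: y0; y1] => //=.
  by rewrite inE y01.
by exists u.
Qed.

Lemma three_point_test t y0 y1 y2 : uniq [:: y0; y1; y2] ->
  exists u : 'S_n, [/\ u ord0 = y0, u (one m) = y1 & u (pt t) = y2].
Proof.
move=> uniq_y.
have [| | |u [u0 u1 u2]] := @perm_map_exists _ [:: ord0; one m; pt t] [:: y0; y1; y2] => //=.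
by exists u.
Qed.

Definition pair_phi (p : 'I_m) (u : 'S_n) : algC := pair_fun (wvec p) (u ord0) (u (one m)).

Lemma pair_phi_eig p : star_eigfun (pair_phi p) 0.
Proof.
move=> u; rewrite mul0r -[RHS](pair_fun_star (wvec0 p) (sum_wvec p) (y := u ord0) (z := u (one m))).
  by apply: eq_bigr => j _; rewrite /pair_phi !permM.
by rewrite (inj_eq perm_inj) eq_sym one_neq0.
Qed.

Lemma pair_phi_test p q (u : 'S_n) : u ord0 = ord0 -> u (one m) = pt q ->
  pair_phi p u = (m%:R - 1) * (p == q)%:R.
Proof.
move=> u0 u1; rewrite /pair_phi /pair_fun u0 u1 wvec0 wvec_pt zeta0 mul0r addr0.
by rewrite mulrC eq_sym.
Qed.

End KernelEigenfunctions.

Section LargeKernel.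
Variable m : nat.
Hypothesis three_le_m : (3 <= m)%N.
Local Notation n := m.+2.
Local Notation A := (cayley_adj (Tn n)).

Let two_le_m : (2 <= m)%N := ltnW three_le_m.
Let third : 'I_m := Ordinal (ltnW two_le_m).
Local Notation elt := (elt two_le_m).

Lemma hookdet2 S (x : 'I_2 -> 'I_n) : hookdet two_le_m S x =
  minor2 (wvec (elt S ord0)) (wvec (elt S ord_max)) (x ord0) (x ord_max).
Proof. by rewrite /hookdet det2 !mxE /minor2 [wvec _ (x ord_max) * _]mulrC. Qed.

Definition triple_phi (S : {set 'I_m}) (u : 'S_n) : algC :=
  triple_fun (wvec (elt S ord0)) (wvec (elt S ord_max)) (u ord0) (u (one m)) (u (pt third)).

Lemma triple_phi_eig S : star_eigfun (triple_phi S) 0.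
Proof.
move=> u; set s0 := elt S ord0; set s1 := elt S ord_max.
rewrite mul0r -[RHS](triple_fun_star (wvec0 s0) (wvec0 s1) (sum_wvec s0) (sum_wvec s1)
  (x0 := u ord0) (x1 := u (one m)) (x2 := u (pt third))).
- by apply: eq_bigr => j _; rewrite /triple_phi !permM.
- by rewrite (inj_eq perm_inj) eq_sym one_neq0.
- by rewrite (inj_eq perm_inj) eq_sym pt_neq0.
- by rewrite (inj_eq perm_inj) eq_sym pt_neq1.
Qed.

Lemma triple_phi_fix0 S (u : 'S_n) : u ord0 = ord0 -> triple_phi S u = 0.
Proof.
by move=> u0; rewrite /triple_phi /triple_fun /minor2 u0 !wvec0 !mul0r !mulr0 !subrr !mul0r addr0.
Qed.

Lemma triple_phi_test (S T : {set 'I_m}) (u : 'S_n) : #|S| = 2 -> #|T| = 2 ->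
  u ord0 = pt (elt T ord0) -> u (one m) = pt (elt T ord_max) -> u (pt third) = ord0 ->
  triple_phi S u = (m%:R - 2) * (S == T)%:R.
Proof.
move=> card_S card_T u0 u1 u2.
rewrite -(hookdet_pt_elt two_le_m card_S card_T) hookdet2 /triple_phi /triple_fun u0 u1 u2.
by rewrite zeta0 {2}/minor2 !wvec0 !mulr0 !mul0r subrr mul0r addr0 mulrC; congr (_ * _); ring.
Qed.

Lemma kernel_mult_large : ('C(m.+1, 2) <= eig_mult A 0%R)%N.
Proof.
pose KS := [set S : {set 'I_m} | #|S| == 2].
pose S (i : 'I_#|KS|) : {set 'I_m} := enum_val i.
have card_S i : #|S i| = 2 by have := enum_valP i; rewrite inE => /eqP.
have <- : (m + #|KS| = 'C(m.+1, 2))%N by rewrite binS bin1 card_draws card_ord addnC.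
have test1 q : exists u : 'S_n, u ord0 = ord0 /\ u (one m) = pt q.
  by apply: two_point_test; rewrite eq_sym pt_neq0.
have test2 i : exists u : 'S_n, [/\ u ord0 = pt (elt (S i) ord0),
    u (one m) = pt (elt (S i) ord_max) & u (pt third) = ord0].
  apply: three_point_test.
  by rewrite /= !inE negb_or !pt_neq0 (inj_eq pt_inj) (inj_eq (elt_inj (card_S i))).
have [[u1 u1P] [u2 u2P]] := (fin_all_exists test1, fin_all_exists test2).
apply: (eig_mult_lb_block (phi1 := @pair_phi m) (phi2 := fun i => triple_phi (S i))
                          (u1 := u1) (u2 := u2)).
- exact: pair_phi_eig.
- by move=> i; apply: triple_phi_eig.
- apply: (diag_unitmx (d := fun _ => m%:R - 1)) => [p q | _].
    by rewrite mxE; case: (u1P q) => /pair_phi_test; apply.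
  by rewrite subr_eq0 pnatr_eq1 gtn_eqF // ltnW.
- apply: (diag_unitmx (d := fun _ => m%:R - 2)) => [i j | _].
    case: (u2P j) => u_0 u_1 u_2.
    by rewrite mxE (triple_phi_test (card_S i) (card_S j)) // (inj_eq enum_val_inj).
  by rewrite subr_eq0 (eqr_nat _ m 2) gtn_eqF.
by move=> i q; case: (u1P q) => /triple_phi_fix0.
Qed.

End LargeKernel.

Section KernelFour.
Local Notation A := (cayley_adj (Tn 4)).

(* For n = 4 the second family degenerates (its test value m - 2 is 0); it
   is replaced by a single pair function, now of the positions one and
   pt 0, built from wvec 0 - wvec 1. *)
Definition wdiff (y : 'I_4) : algC := wvec (ord0 : 'I_2) y - wvec ord_max y.

Definition four_phi (u : 'S_4) : algC := pair_fun wdiff (u (one 2)) (u (pt (ord0 : 'I_2))).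

Lemma four_phi_eig : star_eigfun four_phi 0.
Proof.
have wdiff0 : wdiff ord0 = 0 by rewrite /wdiff !wvec0 subrr.
have sum_wdiff : \sum_y wdiff y = 0 by rewrite sumrB !sum_wvec subrr.
move=> u; rewrite mul0r -[RHS](pair_fun_star wdiff0 sum_wdiff (y := u (one 2)) (z := u (pt ord0))).
  by apply: eq_bigr => j _; rewrite /four_phi !permM.
by rewrite (inj_eq perm_inj) eq_sym pt_neq1.
Qed.

Lemma kernel_mult_four : ('C(3, 2) <= eig_mult A 0%R)%N.
Proof.
have test1 q : exists u : 'S_4, [/\ u ord0 = ord0, u (one 2) = pt q & u (pt ord0) = pt (rev_ord q)].
  by apply: three_point_test; case: q => [[|[|]]].
have test2 : exists u : 'S_4, [/\ u ord0 = pt ord_max, u (one 2) = ord0 & u (pt ord0) = pt ord0].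
  exact: three_point_test.
have [[u1 u1P] [u2 u2P]] := (fin_all_exists test1, test2).
apply: (eig_mult_lb_block (c1 := 2) (c2 := 1) (phi1 := @pair_phi 2) (phi2 := fun _ => four_phi)
  (u1 := u1) (u2 := fun _ => u2)).
- exact: pair_phi_eig.
- by move=> _; apply: four_phi_eig.
- apply: (diag_unitmx (d := fun _ => 2%:R - 1)) => [p q | _].
    by rewrite mxE; case: (u1P q) => u_0 u_1 _; apply: pair_phi_test.
  by rewrite subr_eq0 pnatr_eq1.
- apply: (diag_unitmx (d := fun _ => 1)) => [i j | _]; last exact: oner_neq0.
  rewrite mxE !ord1 eqxx mul1r; case: u2P => _ u21 u22.
  rewrite /four_phi /pair_fun u21 u22 /wdiff zeta0 !wvec0 !wvec_pt subrr mul0r addr0 /=.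
  by rewrite subr0 mul1r (_ : 2 = 1 + 1) // addrK.
move=> _ q; case: (u1P q) => _ u11 u12; rewrite /four_phi /pair_fun u11 u12 !zetaN ?pt_neq0 //.
by rewrite /wdiff !wvec_pt; case: q {u11 u12} => [[|[|]]] //= _; ring.
Qed.

End KernelFour.

Theorem theorem1 (n : nat) (hn : (2 <= n)%N) :
  (forall l : nat, (1 <= l <= n.-1)%N ->
     [/\ eigenvalue (cayley_adj (Tn n)) ((n - l)%N%:R : algC),
         ('C(n - 2, l - 1) <= eig_mult (cayley_adj (Tn n)) ((n - l)%N%:R : algC)%R)%N,
         eigenvalue (cayley_adj (Tn n)) (- ((n - l)%N%:R : algC))
       & ('C(n - 2, l - 1) <= eig_mult (cayley_adj (Tn n)) (- ((n - l)%N%:R : algC))%R)%N])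
  /\
  ((4 <= n)%N ->
     eigenvalue (cayley_adj (Tn n)) (0 : algC)
     /\ ('C(n - 1, 2) <= eig_mult (cayley_adj (Tn n)) (0 : algC)%R)%N).
Proof.
case: n hn => [|[|m]] // _; split => [l /andP [l_gt0 l_le] | four_le_n].
  (* n = m + 2 and l = k + 1 with k <= m *)
  have l_eq : l = l.-1.+1 by rewrite prednK.
  move: l_le; rewrite l_eq !subSS !subn0 /= ltnS => k_le_m.
  have [mult_pos mult_neg] := hook_eig_mult k_le_m.
  have bin_gt0 : (0 < 'C(m, l.-1))%N by rewrite bin_gt0.
  by split=> //; apply: eigenvalue_rank; apply: leq_trans bin_gt0 _.
have two_le_m : (2 <= m)%N := four_le_n.
have mult0 : ('C(m.+1, 2) <= eig_mult (cayley_adj (Tn m.+2)) 0%R)%N.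
  have [-> | m_neq2] := eqVneq m 2; first exact: kernel_mult_four.
  by apply: kernel_mult_large; rewrite ltn_neqAle eq_sym m_neq2.
have bin_gt0 : (0 < 'C(m.+1, 2))%N by rewrite bin_gt0 ltnS ltnW.
by rewrite subn1; split=> //; apply: eigenvalue_rank; apply: leq_trans bin_gt0 mult0.
Qed.
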